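(* Let $(\mathfrak g,V,\Theta)$ be a Lie–Leibniz triple, with $\mathbb U$, $R_\Theta$, $\sigma$ and $K$ as in the context. Then $K=\{k\in\mathbb U_2:\ [\chi,k]=0\text{ for all }\chi\in R_\Theta\}$; in particular $[R_\Theta,K]=0$.
   Context: Ground field $\mathbb{K}=\mathbb{R}$ or $\mathbb{C}$; all spaces $\mathbb{Z}$-graded with parity equal to degree mod 2. A Lie–Leibniz triple $(\mathfrak g,V,\Theta)$ consists of a Lie algebra $\mathfrak g$, a $\mathfrak g$-module $V$ (action $x\cdot u$) and a linear map $\Theta:V\to\mathfrak g$ with $\Theta(\Theta(u)\cdot v)=[\Theta(u),\Theta(v)]$ for all $u,v\in V$. Construction of $\mathbb U$: $\mathbb U_0=\mathfrak g$, $\mathbb U_1=V[-1]$ ($V$ in degree 1, odd), $\mathbb U_{-p+1}=\mathrm{Hom}(\mathbb U_1,\mathbb U_{-p+2})$ for $p\ge2$; brackets on $\mathbb U_{1-}$: Lie bracket on $\mathfrak g$, and recursively $[x,u]=x(u)$, $[u,x]=-(-1)^{|x|}x(u)$, $[x,y](u)=[x,y(u)]+(-1)^{|y|}[x(u),y]$ for $x,y\in\mathbb U_{0-}$, $u\in\mathbb U_1$, where $x(u)=x\cdot u$ for $x\in\mathfrak g$. This is a semilocal Lie superalgebra and $\mathbb U$ is its unique extension to a Lie superalgebra with $\mathbb U_+$ the free Lie superalgebra on $\mathbb U_1$. $\Theta$ is regarded as an element of $\mathbb U_{-1}=\mathrm{Hom}(\mathbb U_1,\mathfrak g)$. $R_\Theta\subseteq\mathbb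 U_{-1}$ is the $\mathfrak g$-submodule generated by $\Theta$ under the action $x\cdot\phi=[x,\phi]$, i.e. $(x\cdot\phi)(u)=[x,\phi(u)]-\phi(x\cdot u)$; it is the span of $\Theta$ and all $x_1\cdot(x_2\cdot\cdots(x_n\cdot\Theta))$. $\mathbb U_2$ is spanned by the brackets $[u,v]$, $u,v\in\mathbb U_1$ (symmetric in $u,v$). Let $\sigma:\mathbb U_2\to\mathbb U_1$ be the linear map with $\sigma([u,v])=\tfrac12(\Theta(u)\cdot v+\Theta(v)\cdot u)$. $K$ is the sum of all $\mathfrak g$-submodules of $\mathbb U_2$ (for the adjoint action of $\mathfrak g\subseteq\mathbb U$) contained in $\ker\sigma$. *)

From HB Require Import structures.
From mathcomp Require Import all_boot all_order all_algebra.
From mathcomp Require Import Rstruct.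
From mathcomp Require Import complex.
From Stdlib Require Reals.

Set Implicit Arguments.
Unset Strict Implicit.
Unset Printing Implicit Defensive.
Import Order.TTheory GRing.Theory Num.Theory.
Local Open Scope ring_scope.

Section LieLeibniz.
Variable F : fieldType.

Definition lie_bracket (g : lmodType F) (br : g -> g -> g) : Prop :=
  [/\ forall x, linear (br x),
      forall y, linear (fun x => br x y),
      forall x, br x x = 0
    & forall x y z, br x (br y z) + br y (br z x) + br z (br x y) = 0].

Definition lie_module (g V : lmodType F) (br : g -> g -> g)
    (act : g -> V -> V) : Prop :=
  [/\ forall x, linear (act x),
      forall v, linear (fun x => act x v)
    & forall x y v, act (br x y) v = act x (act y v) - act y (act x v)].

Definition lie_leibniz_triple (g V : lmodType F) (br : g -> g -> g)
    (act : g -> V -> V) (Theta : V -> g) : Prop :=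
  [/\ lie_bracket br, lie_module br act, linear Theta
    & forall u v, Theta (act (Theta u) v) = br (Theta u) (Theta v)].

(* (W, b) is the degree-2 part U_2 of the free Lie superalgebra on the odd
   space U_1 = V[-1], with b u v = [u, v]: i.e. W is the symmetric square
   of V, b the universal symmetric bilinear map (whose values span W). *)
Definition sym_square (V W : lmodType F) (b : V -> V -> W) : Prop :=
  [/\ forall u, linear (b u),
      forall u v, b u v = b v u,
      forall w : W, exists s : seq (V * V), w = \sum_(p <- s) b p.1 p.2
    & forall (X : lmodType F) (f : V -> V -> X),
        (forall u, linear (f u)) -> (forall u v, f u v = f v u) ->
        exists h : W -> X, linear h /\ forall u v, h (b u v) = f u v].

(* g-action on Hom(U_1, g) = U_{-1}:  (x . phi)(u) = [x, phi u] - phi (x . u). *)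
Definition hom_act (g V : lmodType F) (br : g -> g -> g) (act : g -> V -> V)
    (x : g) (phi : V -> g) : V -> g :=
  fun u => br x (phi u) - phi (act x u).

Inductive R_Theta (g V : lmodType F) (br : g -> g -> g) (act : g -> V -> V)
    (Theta : V -> g) : (V -> g) -> Prop :=
  | RT_base : R_Theta br act Theta Theta
  | RT_act x phi : R_Theta br act Theta phi ->
      R_Theta br act Theta (hom_act br act x phi)
  | RT_zero : R_Theta br act Theta (fun _ => 0)
  | RT_add phi psi : R_Theta br act Theta phi -> R_Theta br act Theta psi ->
      R_Theta br act Theta (fun u => phi u + psi u)
  | RT_scale (a : F) phi : R_Theta br act Theta phi ->
      R_Theta br act Theta (fun u => a *: phi u).

Definition g_submodule (g W : lmodType F) (ad2 : g -> W -> W)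
    (S : W -> Prop) : Prop :=
  [/\ S 0, forall w1 w2, S w1 -> S w2 -> S (w1 + w2),
      forall (a : F) w, S w -> S (a *: w)
    & forall x w, S w -> S (ad2 x w)].

(* K = sum of all g-submodules of U_2 contained in ker sigma:
   finite sums of elements each lying in such a submodule. *)
Definition in_K (g V W : lmodType F) (ad2 : g -> W -> W) (sigma : W -> V)
    (k : W) : Prop :=
  exists s : seq W, k = \sum_(w <- s) w /\
    forall w, w \in s -> exists S : W -> Prop,
      [/\ g_submodule ad2 S, forall y, S y -> sigma y = 0 & S w].

Definition prop47_over : Prop :=
  forall (g V W : lmodType F) (br : g -> g -> g) (act : g -> V -> V)
    (Theta : V -> g) (b : V -> V -> W)
    (ad2 : g -> W -> W) (brk : (V -> g) -> W -> V) (sigma : W -> V),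
  lie_leibniz_triple br act Theta ->
  sym_square b ->
  (* adjoint action of g on U_2: [x,[u,v]] = [x.u, v] + [u, x.v] *)
  (forall x, linear (ad2 x)) ->
  (forall x u v, ad2 x (b u v) = b (act x u) v + b u (act x v)) ->
  (* bracket U_{-1} x U_2 -> U_1: [chi,[u,v]] = chi(u).v + chi(v).u *)
  (forall chi : V -> g, linear chi ->
     linear (brk chi) /\
     forall u v, brk chi (b u v) = act (chi u) v + act (chi v) u) ->
  linear sigma ->
  (forall u v, sigma (b u v) = 2^-1 *: (act (Theta u) v + act (Theta v) u)) ->
  (forall k : W, in_K ad2 sigma k <->
     (forall chi, R_Theta br act Theta chi -> brk chi k = 0)) /\
  (forall chi k, R_Theta br act Theta chi -> in_K ad2 sigma k -> brk chi k = 0).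

End LieLeibniz.

From HB Require Import structures.
From mathcomp Require Import all_boot all_order all_algebra.
From mathcomp Require Import Rstruct.
From mathcomp Require Import complex.
From Stdlib Require Reals.

(* For chi : V -> g write [chi, _] := brk chi : U_2 -> U_1.  Two identities
   drive the proof: [Theta, k] = 2 sigma(k), and the Jacobi identity
   [x.chi, k] = x.[chi, k] - [chi, [x, k]].  By the latter, for a fixed
   g-submodule S of U_2 the maps chi killing S form a g-submodule of U_{-1};
   if S lies in ker sigma it contains Theta, hence all of R_Theta, so K is
   annihilated by R_Theta.  Conversely the annihilator of R_Theta is a
   g-submodule of U_2 (Jacobi again, R_Theta being g-stable), and it lies in
   ker sigma because Theta is in R_Theta and 2 is invertible; so it is one
   of the summands of K. *)

Set Implicit Arguments.
Unset Strict Implicit.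
Unset Printing Implicit Defensive.
Import GRing.Theory Num.Theory.
Local Open Scope ring_scope.

Section LinearPred.
Variables (R : pzRingType) (U X : lmodType R) (f : U -> X).
Hypothesis f_linear : linear f.

Lemma linear_forD u v : f (u + v) = f u + f v.
Proof. exact: (GRing.semilinear_linear f_linear).2. Qed.

Lemma linear_forZ a u : f (a *: u) = a *: f u.
Proof. exact: (GRing.semilinear_linear f_linear).1. Qed.

Lemma linear_forB u v : f (u - v) = f u - f v.
Proof. exact: GRing.zmod_morphism_linear. Qed.

Lemma linear_for0 : f 0 = 0.
Proof. by rewrite -(subrr 0) linear_forB subrr. Qed.

End LinearPred.

Lemma additive_eq_on_span (I : Type) (W X : zmodType) (gen : I -> W)
    (h1 h2 : W -> X) :
    (forall w, exists s : seq I, w = \sum_(i <- s) gen i) ->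
    {morph h1 : w1 w2 / w1 + w2} -> h1 0 = 0 ->
    {morph h2 : w1 w2 / w1 + w2} -> h2 0 = 0 ->
    (forall i, h1 (gen i) = h2 (gen i)) -> h1 =1 h2.
Proof.
move=> span h1D h10 h2D h20 eq_gen w; have [s ->] := span w.
elim: s => [|i s IHs]; first by rewrite !big_nil h10 h20.
by rewrite !big_cons h1D h2D IHs eq_gen.
Qed.

Section Proposition47.
Variables (F : fieldType) (g V W : lmodType F).
Variables (br : g -> g -> g) (act : g -> V -> V) (Theta : V -> g).
Variables (b : V -> V -> W) (ad2 : g -> W -> W).
Variables (brk : (V -> g) -> W -> V) (sigma : W -> V).

Hypothesis br_linear : forall x, linear (br x).
Hypothesis act_linear : forall x, linear (act x).
Hypothesis act_linear_l : forall v, linear (act^~ v).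
Hypothesis act_br :
  forall x y v, act (br x y) v = act x (act y v) - act y (act x v).
Hypothesis Theta_linear : linear Theta.
Hypothesis b_span : forall w, exists s : seq (V * V), w = \sum_(p <- s) b p.1 p.2.
Hypothesis ad2_linear : forall x, linear (ad2 x).
Hypothesis ad2_b : forall x u v, ad2 x (b u v) = b (act x u) v + b u (act x v).
Hypothesis brk_spec : forall chi : V -> g, linear chi ->
  linear (brk chi) /\ forall u v, brk chi (b u v) = act (chi u) v + act (chi v) u.
Hypothesis sigma_linear : linear sigma.
Hypothesis sigma_b :
  forall u v, sigma (b u v) = 2^-1 *: (act (Theta u) v + act (Theta v) u).
Hypothesis two_neq0 : (2 : F) != 0.

Local Notation R_Theta := (R_Theta br act Theta).
Local Notation hom_act := (hom_act br act).

Lemma hom_act_linear x phi : linear phi -> linear (hom_act x phi).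
Proof.
move=> phi_linear a u v; rewrite /hom_act (act_linear x) phi_linear.
by rewrite (br_linear x) phi_linear scalerBr opprD addrACA.
Qed.

Lemma R_Theta_linear chi : R_Theta chi -> linear chi.
Proof.
elim=> // [x phi _ /hom_act_linear // | a u v | phi psi _ phiL _ psiL a u v
          | c phi _ phiL a u v].
- by rewrite scaler0 addr0.
- by rewrite phiL psiL scalerDr addrACA.
- by rewrite phiL scalerDr !scalerA mulrC.
Qed.

Section BracketLinear.
Variable chi : V -> g.
Hypothesis chi_linear : linear chi.

Lemma brkD : {morph brk chi : w1 w2 / w1 + w2}.
Proof. exact/linear_forD/(brk_spec chi_linear).1. Qed.

Lemma brk0 : brk chi 0 = 0.
Proof. exact/linear_for0/(brk_spec chi_linear).1. Qed.

Lemma brkZ a w : brk chi (a *: w) = a *: brk chi w.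
Proof. exact/linear_forZ/(brk_spec chi_linear).1. Qed.

Lemma brk_b u v : brk chi (b u v) = act (chi u) v + act (chi v) u.
Proof. exact: (brk_spec chi_linear).2. Qed.

Lemma brk_eq (h : W -> V) :
    {morph h : w1 w2 / w1 + w2} -> h 0 = 0 ->
    (forall u v, h (b u v) = act (chi u) v + act (chi v) u) ->
  brk chi =1 h.
Proof.
move=> hD h0 h_b; apply: (additive_eq_on_span b_span) => //.
- exact: brkD.
- exact: brk0.
- by case=> u v; rewrite brk_b h_b.
Qed.

End BracketLinear.

Lemma brk_Jacobi x phi : linear phi -> forall w,
  brk (hom_act x phi) w = act x (brk phi w) - brk phi (ad2 x w).
Proof.
move=> phiL; apply: brk_eq (hom_act_linear x phiL) _ _ _ _.
- move=> w1 w2; rewrite brkD // linear_forD // (linear_forD (ad2_linear x)).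
  by rewrite brkD // opprD addrACA.
- by rewrite brk0 // linear_for0 // (linear_for0 (ad2_linear x)) brk0 // subr0.
move=> u v; rewrite /hom_act ad2_b brkD // !brk_b // linear_forD //.
rewrite !(linear_forB (act_linear_l _)) !act_br.
by rewrite !opprD !addrA [LHS](ACl (1*5*3*2*4*6)).
Qed.

Lemma brk_Theta : forall w, brk Theta w = 2 *: sigma w.
Proof.
apply: brk_eq Theta_linear _ _ _ _.
- by move=> w1 w2; rewrite linear_forD // scalerDr.
- by rewrite linear_for0 // scaler0.
- by move=> u v; rewrite sigma_b scalerA mulfV // scale1r.
Qed.

Lemma brk0l : forall w, brk (fun _ => 0) w = 0.
Proof.
have zero_linear : linear (fun _ : V => 0 : g) by move=> a u v; rewrite scaler0 addr0.
apply: brk_eq zero_linear _ _ _ _ => // [w1 w2|u v]; first by rewrite addr0.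
by rewrite !(linear_for0 (act_linear_l _)) addr0.
Qed.

Lemma brkDl phi psi : linear phi -> linear psi -> forall w,
  brk (fun u => phi u + psi u) w = brk phi w + brk psi w.
Proof.
move=> phiL psiL.
have sum_linear : linear (fun u => phi u + psi u).
  by move=> a u v; rewrite phiL psiL scalerDr addrACA.
apply: brk_eq sum_linear _ _ _ _ => [w1 w2||u v].
- by rewrite !brkD // addrACA.
- by rewrite !brk0 // addr0.
- by rewrite !brk_b // !(linear_forD (act_linear_l _)) addrACA.
Qed.

Lemma brkZl c phi : linear phi -> forall w,
  brk (fun u => c *: phi u) w = c *: brk phi w.
Proof.
move=> phiL.
have scale_linear : linear (fun u => c *: phi u).
  by move=> a u v; rewrite phiL scalerDr !scalerA mulrC.
apply: brk_eq scale_linear _ _ _ _ => [w1 w2||u v].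
- by rewrite brkD // scalerDr.
- by rewrite brk0 // scaler0.
- by rewrite !brk_b // !(linear_forZ (act_linear_l _)) scalerDr.
Qed.

Definition annihilated_by_R_Theta (k : W) : Prop :=
  forall chi, R_Theta chi -> brk chi k = 0.

Lemma submodule_ker_sigma_annihilated (S : W -> Prop) :
    g_submodule ad2 S -> (forall y, S y -> sigma y = 0) ->
  forall w, S w -> annihilated_by_R_Theta w.
Proof.
move=> [_ _ _ S_ad2] S_sigma w Sw chi R_chi; elim: R_chi w Sw.
- by move=> w Sw; rewrite brk_Theta S_sigma // scaler0.
- move=> x phi /R_Theta_linear phiL IHphi w Sw.
  by rewrite brk_Jacobi // (IHphi _ Sw) (IHphi _ (S_ad2 x w Sw)) subr0 linear_for0.
- by move=> w _; rewrite brk0l.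
- move=> phi psi /R_Theta_linear phiL IHphi /R_Theta_linear psiL IHpsi w Sw.
  by rewrite brkDl // IHphi // IHpsi // addr0.
- by move=> c phi /R_Theta_linear phiL IHphi w Sw; rewrite brkZl // IHphi // scaler0.
Qed.

Lemma in_K_annihilated k : in_K ad2 sigma k -> annihilated_by_R_Theta k.
Proof.
move=> [s [-> s_in_K]] chi R_chi; have chiL := R_Theta_linear R_chi.
rewrite (big_morph (brk chi) (brkD chiL) (brk0 chiL)) big_seq big1 // => w.
move=> /s_in_K [S [S_sub S_sigma Sw]].
exact: submodule_ker_sigma_annihilated S_sub S_sigma w Sw chi R_chi.
Qed.

Lemma annihilated_g_submodule : g_submodule ad2 annihilated_by_R_Theta.
Proof.
split=> [chi /R_Theta_linear chiL | w1 w2 ann1 ann2 chi R_chi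
        | a w ann chi R_chi | x w ann chi R_chi].
- exact: brk0.
- by rewrite brkD ?ann1 ?ann2 ?addr0 //; exact: R_Theta_linear.
- by rewrite brkZ ?ann ?scaler0 //; exact: R_Theta_linear.
- have := brk_Jacobi x (R_Theta_linear R_chi) w.
  rewrite (ann _ (RT_act x R_chi)) (ann _ R_chi) linear_for0 // sub0r.
  by move/eqP; rewrite eq_sym oppr_eq0 => /eqP.
Qed.

Lemma annihilated_ker_sigma y : annihilated_by_R_Theta y -> sigma y = 0.
Proof.
move=> /(_ _ (RT_base br act Theta)); rewrite brk_Theta => /eqP.
by rewrite scaler_eq0 (negbTE two_neq0) => /eqP.
Qed.

Lemma annihilated_in_K k : annihilated_by_R_Theta k -> in_K ad2 sigma k.
Proof.
move=> ann_k; exists [:: k]; split=> [|w]; first by rewrite big_seq1.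
rewrite mem_seq1 => /eqP ->; exists annihilated_by_R_Theta.
by split=> //; [exact: annihilated_g_submodule | exact: annihilated_ker_sigma].
Qed.

Lemma in_K_annihilatedE k : in_K ad2 sigma k <-> annihilated_by_R_Theta k.
Proof. by split; [exact: in_K_annihilated | exact: annihilated_in_K]. Qed.

End Proposition47.

Lemma prop47_over_two_neq0 (F : fieldType) : (2 : F) != 0 -> prop47_over F.
Proof.
move=> two_neq0 g V W br act Theta b ad2 brk sigma
  [[br_linear _ _ _] [act_linear act_linear_l act_br] Theta_linear _]
  [_ _ b_span _] ad2_linear ad2_b brk_spec sigma_linear sigma_b.
split=> [k | chi k R_chi K_k]; first exact: in_K_annihilatedE.
exact: in_K_annihilated K_k chi R_chi.
Qed.

Theorem proposition4p7 :
  prop47_over Reals.Rdefinitions.R /\ prop47_over (complex Reals.Rdefinitions.R).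
Proof. by split; apply: prop47_over_two_neq0; rewrite pnatr_eq0. Qed.
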